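(* Let $\tilde{\mathbf{x}}=(x_s)\in(\mathbb{C}^* )^L$ satisfy the K-hexahedron equations. (a) For each $i\in\mathbb{Z}$ let $\alpha_i,\beta_i,\gamma_i\in\{-1,1\}$, and define $\tilde{\mathbf{y}}=(y_s)\in(\mathbb{C}^* )^L$ by $y_{(a,b,c)}=x_{(a,b,c)}$, $y_{(a,b+\frac12,c+\frac12)}=\beta_b\gamma_c\,x_{(a,b+\frac12,c+\frac12)}$, $y_{(a+\frac12,b,c+\frac12)}=\alpha_a\gamma_c\,x_{(a+\frac12,b,c+\frac12)}$, $y_{(a+\frac12,b+\frac12,c)}=\alpha_a\beta_b\,x_{(a+\frac12,b+\frac12,c)}$ for all $(a,b,c)\in\mathbb{Z}^3$. Then $\tilde{\mathbf{y}}$ satisfies the K-hexahedron equations. (b) Conversely, if $\tilde{\mathbf{y}}=(y_s)\in(\mathbb{C}^* )^L$ satisfies the K-hexahedron equations and $y_s=x_s$ for all $s\in\mathbb{Z}^3$, then there exist signs $\alpha_i,\beta_i,\gamma_i\in\{-1,1\}$, $i\in\mathbb{Z}$, such that $\tilde{\mathbf{y}}$ is given by the formulas in (a) for all $(a,b,c)\in\mathbb{Z}^3$.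
   Context: $L=\{(i,j,k)\in\mathbb{R}^3: 2i,2j,2k,i+j+k\in\mathbb{Z}\}$, i.e. $\mathbb{Z}^3$ together with the centers of unit squares with vertices in $\mathbb{Z}^3$. An array $\tilde{\mathbf{x}}=(x_s)\in\mathbb{C}^L$ with $x_s\ne0$ for $s\in\mathbb{Z}^3$ satisfies the K-hexahedron equations if (i) for every $s\in L\setminus\mathbb{Z}^3$, $x_s^2=x_{v_1}x_{v_3}+x_{v_2}x_{v_4}$, where $v_1,v_2,v_3,v_4$ are the vertices in cyclic order of the unit square centered at $s$; and (ii) for every $v\in\mathbb{Z}^3$, writing $z_{ijk}=x_{v+(i,j,k)}$: $z_{1\frac12\frac12}=(z_{\frac120\frac12}z_{\frac12\frac120}+z_{0\frac12\frac12}z_{100})/z_{000}$, $z_{\frac121\frac12}=(z_{0\frac12\frac12}z_{\frac12\frac120}+z_{\frac120\frac12}z_{010})/z_{000}$, $z_{\frac12\frac121}=(z_{0\frac12\frac12}z_{\frac120\frac12}+z_{\frac12\frac120}z_{001})/z_{000}$, $z_{111}=(A+2z_{0\frac12\frac12}z_{\frac120\frac12}z_{\frac12\frac120})/z_{000}^2$ with $A=2z_{100}z_{010}z_{001}+z_{000}(z_{100}z_{011}+z_{010}z_{101}+z_{001}z_{110})$. *)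

From mathcomp Require Import Rstruct.
From HB Require Import structures.
From mathcomp Require Import all_boot all_order all_algebra.
From mathcomp Require Import complex.
Set Implicit Arguments. Unset Strict Implicit. Unset Printing Implicit Defensive.
Import Order.TTheory GRing.Theory Num.Theory.
Local Open Scope ring_scope.

Definition C : Type := complex Rdefinitions.R.

(* Points of L = { s in (1/2 Z)^3 : 2i,2j,2k, i+j+k in Z } are encoded by
   their DOUBLED coordinates (p,q,r) in Z^3 with p+q+r even.
   Z^3 corresponds to (2a,2b,2c); face centres have exactly two odd coords.
   An array in C^L is a function int -> int -> int -> C (values at triples
   outside L are irrelevant and never used). *)
Definition arr := int -> int -> int -> C.

Definition inL (p q r : int) : Prop := exists k : int, p + q + r = 2 * k.

Definition nonzero_on_L (x : arr) : Prop :=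
  forall p q r, inL p q r -> x p q r != 0.

Definition KHex (x : arr) : Prop :=
  (forall a b c : int, x (2*a) (2*b) (2*c) != 0) /\
  (forall a b c : int,
      x (2*a) (2*b+1) (2*c+1) ^+ 2 =
        x (2*a) (2*b) (2*c) * x (2*a) (2*b+2) (2*c+2)
      + x (2*a) (2*b+2) (2*c) * x (2*a) (2*b) (2*c+2)) /\
  (forall a b c : int,
      x (2*a+1) (2*b) (2*c+1) ^+ 2 =
        x (2*a) (2*b) (2*c) * x (2*a+2) (2*b) (2*c+2)
      + x (2*a+2) (2*b) (2*c) * x (2*a) (2*b) (2*c+2)) /\
  (forall a b c : int,
      x (2*a+1) (2*b+1) (2*c) ^+ 2 =
        x (2*a) (2*b) (2*c) * x (2*a+2) (2*b+2) (2*c)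
      + x (2*a+2) (2*b) (2*c) * x (2*a) (2*b+2) (2*c)) /\
  (* (ii) hexahedron equations at v = (a,b,c); z i j k = x_{v + (i,j,k)/2} *)
  (forall a b c : int,
     let z := fun i j k : int => x (2*a + i) (2*b + j) (2*c + k) in
     [/\ z 2 1 1 = (z 1 0 1 * z 1 1 0 + z 0 1 1 * z 2 0 0) / z 0 0 0,
         z 1 2 1 = (z 0 1 1 * z 1 1 0 + z 1 0 1 * z 0 2 0) / z 0 0 0,
         z 1 1 2 = (z 0 1 1 * z 1 0 1 + z 1 1 0 * z 0 0 2) / z 0 0 0 &
         z 2 2 2 =
           (2 * z 2 0 0 * z 0 2 0 * z 0 0 2
            + z 0 0 0 * (z 2 0 0 * z 0 2 2 + z 0 2 0 * z 2 0 2
                         + z 0 0 2 * z 2 2 0)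
            + 2 * z 0 1 1 * z 1 0 1 * z 1 1 0) / z 0 0 0 ^+ 2]).

Definition is_sign (e : C) : Prop := e = 1 \/ e = -1.

Definition sign_twist (al be ga : int -> C) (x y : arr) : Prop :=
  forall a b c : int,
    [/\ y (2*a) (2*b) (2*c) = x (2*a) (2*b) (2*c),
        y (2*a) (2*b+1) (2*c+1) = be b * ga c * x (2*a) (2*b+1) (2*c+1),
        y (2*a+1) (2*b) (2*c+1) = al a * ga c * x (2*a+1) (2*b) (2*c+1) &
        y (2*a+1) (2*b+1) (2*c) = al a * be b * x (2*a+1) (2*b+1) (2*c)].

From mathcomp Require Import Rstruct.
From HB Require Import structures.
From mathcomp Require Import all_boot all_order all_algebra.
From mathcomp Require Import complex ring.
Import Order.TTheory GRing.Theory Num.Theory.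
Local Open Scope ring_scope.

(* Only squares of face variables enter the face equations, and in each
   hexahedron equation both sides pick up the same product of signs, so sign
   twists preserve the equations.  Conversely, the face equations give
   y_s = r_s x_s with r_s = +-1 on faces.  In each of the first three
   hexahedron equations the right-hand side is (A + B) / x_v with A, B and
   A + B nonzero, and for y it becomes (s A + t B) / x_v; this forces s = t,
   so the ratio r on a face does not change under a unit step normal to it,
   and it is the product of the ratios on the two other faces at the same
   corner.  Three such sign families r1(b,c) = r2(a,c) r3(a,b) always split
   as beta_b gamma_c, alpha_a gamma_c, alpha_a beta_b. *)

Lemma sign_cases (R : idomainType) (e : R) : e ^+ 2 = 1 -> e = 1 \/ e = -1.
Proof. by move/eqP; rewrite sqrf_eq1 => /orP[]/eqP; [left | right]. Qed.

Lemma is_sign_sqr (e : C) : is_sign e <-> e ^+ 2 = 1.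
Proof. by split=> [[]->|/sign_cases//]; rewrite ?sqrrN expr1n. Qed.

Lemma signed_sum_eq {R : numDomainType} {s t u A B : R} :
  s ^+ 2 = 1 -> t ^+ 2 = 1 -> u ^+ 2 = 1 -> A != 0 -> B != 0 -> A + B != 0 ->
  u * (A + B) = s * A + t * B -> s = u /\ t = u.
Proof.
have eq0_double (X : R) : X *+ 2 = 0 -> X == 0 by move/eqP; rewrite mulrn_eq0.
move=> /sign_cases[]-> /sign_cases[]-> /sign_cases[]-> nzA nzB nzAB /eqP;
  rewrite -subr_eq0 => /eqP e; try by [].
(* each mixed-sign case says that 2 A, 2 B or 2 (A + B) vanishes *)
all: exfalso; [> move: nzAB | move: nzB | move: nzA | move: nzA | move: nzB | move: nzAB].
all: move/negP; apply; apply: eq0_double.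
all: first [by rewrite -e; ring | by rewrite -oppr0 -e; ring].
Qed.

Lemma signed_quotient_eq {R : numFieldType} {s t u A B D X : R} :
  X = (A + B) / D -> u * X = (s * A + t * B) / D ->
  s ^+ 2 = 1 -> t ^+ 2 = 1 -> u ^+ 2 = 1 -> A != 0 -> B != 0 -> X != 0 ->
  s = u /\ t = u.
Proof.
move=> XE uXE s_sq t_sq u_sq nzA nzB nzX.
have [nzAB nzD] : A + B != 0 /\ D != 0.
  by move: nzX; rewrite XE mulf_eq0 negb_or invr_eq0 => /andP.
apply: (signed_sum_eq (A := A) (B := B)) => //.
by rewrite -(divfK nzD (A + B)) -XE mulrA uXE divfK.
Qed.

Lemma eq_succ_const {T : Type} (f : int -> T) :
  (forall a, f (a + 1) = f a) -> forall a, f a = f 0.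
Proof.
move=> f_succ; elim/int_ind=> [//|n IHn|n IHn].
  by rewrite -addn1 PoszD f_succ.
by rewrite -IHn -[in RHS](subrK 1 (- n%:Z)) f_succ -opprD -PoszD addn1.
Qed.

Lemma sign_cocycle_split {R : comPzRingType} {I : Type} {f g h : I -> I -> R}
    (o : I) :
  (forall a c, g a c ^+ 2 = 1) -> (forall a b, h a b ^+ 2 = 1) ->
  (forall a b c, f b c = g a c * h a b) ->
  exists al be ga : I -> R,
    [/\ forall i, al i ^+ 2 = 1, forall i, be i ^+ 2 = 1, forall i, ga i ^+ 2 = 1 &
        forall a b c,
          [/\ f b c = be b * ga c, g a c = al a * ga c & h a b = al a * be b]].
Proof.
move=> g_sq h_sq fE.
have g_via_h a c : g a c = g o c * h o o * h a o.
  by rewrite -[g a c]mulr1 -(h_sq a o) expr2 mulrA -fE (fE o).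
have h_via_g a b : h a b = h o b * g o o * g a o.
  by rewrite -[h a b]mul1r -(g_sq a o) expr2 -mulrA -fE (fE o); ring.
exists (h^~ o), (fun b => h o b * h o o), (fun c => g o c * h o o).
split=> [i | i | i | a b c]; rewrite ?exprMn ?g_sq ?h_sq ?mulr1 //; split.
- by rewrite (fE o) -[LHS]mulr1 -(h_sq o o); ring.
- by rewrite g_via_h; ring.
- by rewrite h_via_g (g_via_h a o) -[RHS]mulr1 -(g_sq o o); ring.
Qed.

Lemma int_double_succ (a : int) : 2 * a + 2 = 2 * (a + 1).
Proof. by rewrite mulrDr mulr1. Qed.

Lemma KHex_hexE {x : arr} : KHex x -> forall a b c,
  [/\ x (2*(a+1)) (2*b+1) (2*c+1)
      = (x (2*a+1) (2*b) (2*c+1) * x (2*a+1) (2*b+1) (2*c)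
         + x (2*a) (2*b+1) (2*c+1) * x (2*(a+1)) (2*b) (2*c)) / x (2*a) (2*b) (2*c),
      x (2*a+1) (2*(b+1)) (2*c+1)
      = (x (2*a) (2*b+1) (2*c+1) * x (2*a+1) (2*b+1) (2*c)
         + x (2*a+1) (2*b) (2*c+1) * x (2*a) (2*(b+1)) (2*c)) / x (2*a) (2*b) (2*c),
      x (2*a+1) (2*b+1) (2*(c+1))
      = (x (2*a) (2*b+1) (2*c+1) * x (2*a+1) (2*b) (2*c+1)
         + x (2*a+1) (2*b+1) (2*c) * x (2*a) (2*b) (2*(c+1))) / x (2*a) (2*b) (2*c) &
      x (2*(a+1)) (2*(b+1)) (2*(c+1))
      = (2 * x (2*(a+1)) (2*b) (2*c) * x (2*a) (2*(b+1)) (2*c) * x (2*a) (2*b) (2*(c+1))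
         + x (2*a) (2*b) (2*c)
           * (x (2*(a+1)) (2*b) (2*c) * x (2*a) (2*(b+1)) (2*(c+1))
              + x (2*a) (2*(b+1)) (2*c) * x (2*(a+1)) (2*b) (2*(c+1))
              + x (2*a) (2*b) (2*(c+1)) * x (2*(a+1)) (2*(b+1)) (2*c))
         + 2 * x (2*a) (2*b+1) (2*c+1) * x (2*a+1) (2*b) (2*c+1)
             * x (2*a+1) (2*b+1) (2*c)) / x (2*a) (2*b) (2*c) ^+ 2].
Proof.
by case=> _ [_ [_ [_ hex]]] a b c; move: (hex a b c); rewrite /= !addr0 !int_double_succ.
Qed.

Section SignTwist.

Variables (al be ga : int -> C) (x y : arr).
Hypotheses (al_sign : forall i, is_sign (al i)) (be_sign : forall i, is_sign (be i))
  (ga_sign : forall i, is_sign (ga i)) (twist : sign_twist al be ga x y).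

Lemma twist_vertex a b c : y (2*a) (2*b) (2*c) = x (2*a) (2*b) (2*c).
Proof. by case: (twist a b c). Qed.

Lemma twist_face1 a b c :
  y (2*a) (2*b+1) (2*c+1) = be b * ga c * x (2*a) (2*b+1) (2*c+1).
Proof. by case: (twist a b c). Qed.

Lemma twist_face2 a b c :
  y (2*a+1) (2*b) (2*c+1) = al a * ga c * x (2*a+1) (2*b) (2*c+1).
Proof. by case: (twist a b c). Qed.

Lemma twist_face3 a b c :
  y (2*a+1) (2*b+1) (2*c) = al a * be b * x (2*a+1) (2*b+1) (2*c).
Proof. by case: (twist a b c). Qed.

Lemma KHex_sign_twist : KHex x -> KHex y.
Proof.
move=> KHex_x; have [x_vertex_neq0 [face1 [face2 [face3 _]]]] := KHex_x.
have al_sq i : al i ^+ 2 = 1 by apply/is_sign_sqr.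
have be_sq i : be i ^+ 2 = 1 by apply/is_sign_sqr.
have ga_sq i : ga i ^+ 2 = 1 by apply/is_sign_sqr.
split; [|split; [|split; [|split]]] => a b c.
- by rewrite twist_vertex.
- by rewrite twist_face1 !exprMn be_sq ga_sq !mul1r face1 !int_double_succ !twist_vertex.
- by rewrite twist_face2 !exprMn al_sq ga_sq !mul1r face2 !int_double_succ !twist_vertex.
- by rewrite twist_face3 !exprMn al_sq be_sq !mul1r face3 !int_double_succ !twist_vertex.
rewrite /= !addr0 !int_double_succ !twist_vertex !twist_face1 !twist_face2 !twist_face3.
have [-> -> -> ->] := KHex_hexE KHex_x a b c.
by split; case: (al_sign a) => ->; case: (be_sign b) => ->; case: (ga_sign c) => ->; ring.
Qed.

End SignTwist.

Section SignRatios.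

Variables x y : arr.
Hypotheses (x_nz : nonzero_on_L x) (KHex_x : KHex x) (KHex_y : KHex y)
  (vertex_eq : forall a b c, y (2*a) (2*b) (2*c) = x (2*a) (2*b) (2*c)).

Definition ratio1 a b c := y (2*a) (2*b+1) (2*c+1) / x (2*a) (2*b+1) (2*c+1).
Definition ratio2 a b c := y (2*a+1) (2*b) (2*c+1) / x (2*a+1) (2*b) (2*c+1).
Definition ratio3 a b c := y (2*a+1) (2*b+1) (2*c) / x (2*a+1) (2*b+1) (2*c).

Lemma face1_neq0 a b c : x (2*a) (2*b+1) (2*c+1) != 0.
Proof. by apply: x_nz; exists (a + b + c + 1); ring. Qed.

Lemma face2_neq0 a b c : x (2*a+1) (2*b) (2*c+1) != 0.
Proof. by apply: x_nz; exists (a + b + c + 1); ring. Qed.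

Lemma face3_neq0 a b c : x (2*a+1) (2*b+1) (2*c) != 0.
Proof. by apply: x_nz; exists (a + b + c + 1); ring. Qed.

Lemma ratio1E a b c :
  y (2*a) (2*b+1) (2*c+1) = ratio1 a b c * x (2*a) (2*b+1) (2*c+1).
Proof. by rewrite divfK ?face1_neq0. Qed.

Lemma ratio2E a b c :
  y (2*a+1) (2*b) (2*c+1) = ratio2 a b c * x (2*a+1) (2*b) (2*c+1).
Proof. by rewrite divfK ?face2_neq0. Qed.

Lemma ratio3E a b c :
  y (2*a+1) (2*b+1) (2*c) = ratio3 a b c * x (2*a+1) (2*b+1) (2*c).
Proof. by rewrite divfK ?face3_neq0. Qed.

Lemma ratio1_sqr a b c : ratio1 a b c ^+ 2 = 1.
Proof.
have [_ [y_face1 _]] := KHex_y; have [_ [x_face1 _]] := KHex_x.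
rewrite expr_div_n y_face1 !int_double_succ !vertex_eq -!int_double_succ -x_face1.
by rewrite divff // expf_neq0 // face1_neq0.
Qed.

Lemma ratio2_sqr a b c : ratio2 a b c ^+ 2 = 1.
Proof.
have [_ [_ [y_face2 _]]] := KHex_y; have [_ [_ [x_face2 _]]] := KHex_x.
rewrite expr_div_n y_face2 !int_double_succ !vertex_eq -!int_double_succ -x_face2.
by rewrite divff // expf_neq0 // face2_neq0.
Qed.

Lemma ratio3_sqr a b c : ratio3 a b c ^+ 2 = 1.
Proof.
have [_ [_ [_ [y_face3 _]]]] := KHex_y; have [_ [_ [_ [x_face3 _]]]] := KHex_x.
rewrite expr_div_n y_face3 !int_double_succ !vertex_eq -!int_double_succ -x_face3.
by rewrite divff // expf_neq0 // face3_neq0.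
Qed.

Lemma ratio1_succ a b c :
  ratio2 a b c * ratio3 a b c = ratio1 (a + 1) b c /\
  ratio1 a b c = ratio1 (a + 1) b c.
Proof.
have [x_hex _ _ _] := KHex_hexE KHex_x a b c.
have [y_hex _ _ _] := KHex_hexE KHex_y a b c.
apply: (signed_quotient_eq x_hex).
- by rewrite -[LHS]ratio1E y_hex !vertex_eq ratio1E ratio2E ratio3E; ring.
- by rewrite exprMn ratio2_sqr ratio3_sqr mulr1.
- exact: ratio1_sqr.
- exact: ratio1_sqr.
- by rewrite mulf_neq0 ?face2_neq0 ?face3_neq0.
- by rewrite mulf_neq0 ?face1_neq0 ?(proj1 KHex_x).
- exact: face1_neq0.
Qed.

Lemma ratio2_succ a b c :
  ratio1 a b c * ratio3 a b c = ratio2 a (b + 1) c /\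
  ratio2 a b c = ratio2 a (b + 1) c.
Proof.
have [_ x_hex _ _] := KHex_hexE KHex_x a b c.
have [_ y_hex _ _] := KHex_hexE KHex_y a b c.
apply: (signed_quotient_eq x_hex).
- by rewrite -[LHS]ratio2E y_hex !vertex_eq ratio1E ratio2E ratio3E; ring.
- by rewrite exprMn ratio1_sqr ratio3_sqr mulr1.
- exact: ratio2_sqr.
- exact: ratio2_sqr.
- by rewrite mulf_neq0 ?face1_neq0 ?face3_neq0.
- by rewrite mulf_neq0 ?face2_neq0 ?(proj1 KHex_x).
- exact: face2_neq0.
Qed.

Lemma ratio3_succ a b c :
  ratio1 a b c * ratio2 a b c = ratio3 a b (c + 1) /\
  ratio3 a b c = ratio3 a b (c + 1).
Proof.
have [_ _ x_hex _] := KHex_hexE KHex_x a b c.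
have [_ _ y_hex _] := KHex_hexE KHex_y a b c.
apply: (signed_quotient_eq x_hex).
- by rewrite -[LHS]ratio3E y_hex !vertex_eq ratio1E ratio2E ratio3E; ring.
- by rewrite exprMn ratio1_sqr ratio2_sqr mulr1.
- exact: ratio3_sqr.
- exact: ratio3_sqr.
- by rewrite mulf_neq0 ?face1_neq0 ?face2_neq0.
- by rewrite mulf_neq0 ?face3_neq0 ?(proj1 KHex_x).
- exact: face3_neq0.
Qed.

Lemma KHex_sign_twist_converse :
  exists al be ga : int -> C,
    [/\ forall i, is_sign (al i), forall i, is_sign (be i),
        forall i, is_sign (ga i) & sign_twist al be ga x y].
Proof.
have ratio1_const a b c : ratio1 a b c = ratio1 0 b c.
  by apply: (eq_succ_const (ratio1^~ b ^~ c)) => {}a; rewrite (ratio1_succ a b c).2.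
have ratio2_const a b c : ratio2 a b c = ratio2 a 0 c.
  by apply: (eq_succ_const (ratio2 a ^~ c)) => {}b; rewrite (ratio2_succ a b c).2.
have ratio3_const a b c : ratio3 a b c = ratio3 a b 0.
  by apply: (eq_succ_const (ratio3 a b)) => {}c; rewrite (ratio3_succ a b c).2.
have ratio_cocycle a b c : ratio1 0 b c = ratio2 a 0 c * ratio3 a b 0.
  rewrite -(ratio1_const a) -(ratio2_const a b) -(ratio3_const a b c).
  by have [-> ->] := ratio1_succ a b c.
have [al [be [ga [al_sq be_sq ga_sq split_ratios]]]] :=
  sign_cocycle_split 0 (fun a c => ratio2_sqr a 0 c) (fun a b => ratio3_sqr a b 0)
    ratio_cocycle.
exists al, be, ga; split=> [i|i|i|a b c]; rewrite ?is_sign_sqr //.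
have [r1 r2 r3] := split_ratios a b c.
by split; rewrite ?vertex_eq // (ratio1E, ratio2E, ratio3E)
  (ratio1_const, ratio2_const, ratio3_const) (r1, r2, r3).
Qed.

End SignRatios.

Theorem theorem2p23 (x : arr) :
  nonzero_on_L x -> KHex x ->
  (* (a) *)
  (forall al be ga : int -> C,
     (forall i, is_sign (al i)) -> (forall i, is_sign (be i)) ->
     (forall i, is_sign (ga i)) ->
     forall y : arr, sign_twist al be ga x y -> KHex y) /\
  (* (b) *)
  (forall y : arr, nonzero_on_L y -> KHex y ->
     (forall a b c : int, y (2*a) (2*b) (2*c) = x (2*a) (2*b) (2*c)) ->
     exists al be ga : int -> C,
       [/\ forall i, is_sign (al i), forall i, is_sign (be i),
           forall i, is_sign (ga i) & sign_twist al be ga x y]).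
Proof.
move=> x_nz KHex_x.
(* y needs no nonvanishing hypothesis: on faces it follows from y^2 = x^2 *)
split=> [al be ga al_sign be_sign ga_sign y twist | y _ KHex_y vertex_eq].
  exact: KHex_sign_twist twist KHex_x.
exact: KHex_sign_twist_converse.
Qed.
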